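(* Let $d\ge 3$. In the subKautz digraph $sK(d,2)$, for every vertex $u$, the numbers $n_i$ of vertices at distance $i$ from $u$ are $n_0=1$, $n_1=d-1$, $n_2=(d-1)^2$, $n_3=2(d-1)$, $n_4=1$, and $n_i=0$ for $i\ge5$; moreover $sK(d,2)$ is antipodal. In the cyclic Kautz digraph $CK(d,3)$, for every vertex $u$, the numbers $N_i$ of vertices at distance $i$ from $u$ are $N_0=1$, $N_1=d-1$, $N_2=(d-1)^2$, $N_3=(d-1)^3-1$, $N_4=2(d-1)^2$, $N_5=d-1$, and $N_i=0$ for $i\ge 6$.
   Context: SubKautz digraph $sK(d,2)$: vertices $x_1x_2$ with $x_1\neq x_2$ in $\mathbb Z_{d+1}$; arcs $x_1x_2\to x_2x_3$ for $x_3\neq x_1,x_2$. Cyclic Kautz digraph $CK(d,3)$: vertices $x_1x_2x_3\in\mathbb Z_{d+1}^3$ with $x_1,x_2,x_3$ pairwise distinct; arcs $x_1x_2x_3\to x_2x_3y$ for $y\neq x_2,x_3$. A digraph is antipodal if every vertex $u$ has exactly one vertex $v$ at distance equal to the diameter from $u$, and simultaneously $u$ is at distance equal to the diameter from $v$. *)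

From mathcomp Require Import all_boot.
Set Implicit Arguments. Unset Strict Implicit. Unset Printing Implicit Defensive.

Definition walk (T : finType) (e : rel T) (k : nat) (u v : T) : bool :=
  [exists p : k.-tuple T, path e u p && (last u p == v)].

Definition is_dist (T : finType) (e : rel T) (u v : T) (i : nat) : bool :=
  walk e i u v && [forall j : 'I_i, ~~ walk e j u v].

Definition n_at (T : finType) (e : rel T) (u : T) (i : nat) : nat :=
  #|[set v | is_dist e u v i]|.

Definition is_diameter (T : finType) (e : rel T) (D : nat) : Prop :=
  (forall u v : T, exists j, j <= D /\ is_dist e u v j) /\
  (exists u v : T, is_dist e u v D).

Definition antipodal (T : finType) (e : rel T) : Prop :=
  exists D, is_diameter e D /\
    forall u : T, exists v : T,
      [set w | is_dist e u w D] = [set v] /\ is_dist e v u D.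

Definition sK_vert (d : nat) := {x : 'I_d.+1 * 'I_d.+1 | x.1 != x.2}.

Definition sK_arc (d : nat) : rel (sK_vert d) :=
  fun a b => let: (x1, x2) := val a in let: (y2, x3) := val b in
    [&& y2 == x2, x3 != x1 & x3 != x2].

Definition CK_vert (d : nat) :=
  {x : 'I_d.+1 * 'I_d.+1 * 'I_d.+1 |
     [&& x.1.1 != x.1.2, x.1.1 != x.2 & x.1.2 != x.2]}.

Definition CK_arc (d : nat) : rel (CK_vert d) :=
  fun a b => let: (x1, x2, x3) := val a in let: (y2, y3, y) := val b in
    [&& y2 == x2, y3 == x3, y != x2 & y != x3].

(* A labelling f of the vertices that vanishes exactly at u, grows by at most one along each
   arc, and gives every vertex of positive label an in-neighbour of label one less, is the
   distance from u.  In sK(d,2) the distance from ab to xy is determined by the coincidences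
   among a, b, x, y ([sK_distance]); d >= 3 leaves room for the fresh symbols needed to exhibit
   predecessors.  A vertex xyz of CK(d,3) is an arc xy -> yz of sK(d,2), and its distance from
   abc <> xyz is one more than the sK-distance from bc to xy.  So the CK-sphere of radius i+1
   is the sK-sphere of radius i around bc, each vertex extended by one of d-1 symbols, minus
   abc itself, which lies at sK-distance 2 from bc. *)

From mathcomp Require Import all_boot zify.
Set Implicit Arguments. Unset Strict Implicit. Unset Printing Implicit Defensive.

Section Distance.
Variables (T : finType) (e : rel T).

Lemma walkP k u v :
  reflect (exists s : seq T, [/\ size s = k, path e u s & last u s = v]) (walk e k u v).
Proof.
apply: (iffP existsP) => [[p /andP [ep /eqP lastp]] | [s [sz es lasts]]].
  by exists (val p); rewrite size_tuple.
have sz' : size s == k by apply/eqP.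
by exists (Tuple sz'); rewrite /= es lasts eqxx.
Qed.

Lemma walk0 u v : walk e 0 u v = (u == v).
Proof.
apply/walkP/eqP => [[s [sz _ <-]] | <-]; last by exists [::].
by case: s sz.
Qed.

Lemma walkSr k u v : walk e k.+1 u v = [exists w, walk e k u w && e w v].
Proof.
apply/walkP/existsP => [[s [sz es lasts]] | [w /andP [/walkP [s [sz es lasts]] ewv]]].
  case/lastP: s sz es lasts => [//|s x].
  rewrite size_rcons rcons_path last_rcons => -[sz] /andP [es ex] <-.
  by exists (last u s); rewrite ex andbT; apply/walkP; exists s.
by exists (rcons s v); rewrite size_rcons rcons_path last_rcons sz es lasts ewv.
Qed.

Section Labelling.
Variables (f : T -> nat) (u : T).
Hypothesis f_eq0 : forall v, (f v == 0) = (v == u).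
Hypothesis f_arc : forall w v, e w v -> f v <= (f w).+1.
Hypothesis f_pred : forall v, 0 < f v -> exists2 w, f w = (f v).-1 & e w v.

Lemma label_le_walk k v : walk e k u v -> f v <= k.
Proof.
elim: k v => [|k IHk] v; first by rewrite walk0 => /eqP <-; rewrite leqn0 f_eq0.
rewrite walkSr => /existsP [w /andP [/IHk fw ewv]].
exact: leq_trans (f_arc ewv) _.
Qed.

Lemma walk_label v : walk e (f v) u v.
Proof.
move fv: (f v) => n; elim: n v fv => [|n IHn] v fv.
  by rewrite walk0 eq_sym -f_eq0 fv.
have [w fw ewv] := f_pred (ltac:(by rewrite fv) : 0 < f v).
by rewrite walkSr; apply/existsP; exists w; rewrite ewv andbT IHn // fw fv.
Qed.

Lemma is_dist_label v i : is_dist e u v i = (f v == i).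
Proof.
apply/andP/eqP => [[/label_le_walk fv_le /forallP no_shorter] | <-].
  apply/eqP; rewrite eqn_leq fv_le leqNgt; apply/negP => fv_lt.
  by have := no_shorter (Ordinal fv_lt); rewrite walk_label.
split; first exact: walk_label.
by apply/forallP => -[j /= lt_j]; apply/negP => /label_le_walk; rewrite leqNgt lt_j.
Qed.

End Labelling.

Lemma n_at0 u : n_at e u 0 = 1.
Proof.
rewrite /n_at -(cards1 u); suff -> : [set v | is_dist e u v 0] = [set u] by [].
apply/setP => v; rewrite !inE /is_dist walk0 eq_sym.
by case: eqP => //= _; apply/forallP => -[].
Qed.
End Distance.

Lemma card_sig_set (T : finType) (Q P : pred T) :
  #|[set v : {x | Q x} | P (val v)]| = #|[pred x | Q x && P x]|.
Proof.
rewrite -(card_imset _ val_inj); apply: eq_card => x; rewrite inE.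
apply/imsetP/andP => [[v vP ->] | [Qx Px]]; first by rewrite inE in vP; split; [exact: valP|].
by exists (exist _ x Qx); rewrite ?inE.
Qed.

Lemma card_prod_dep (T1 T2 : finType) (P : pred (T1 * T2)) (A : pred T1) (B : T1 -> pred T2) k :
  (forall x y, P (x, y) = A x && B x y) -> {in A, forall x, #|B x| = k} -> #|P| = #|A| * k.
Proof.
move=> PE Bk; rewrite -[LHS]sum1_card.
transitivity (\sum_(p | A p.1 && B p.1 p.2) 1); first by apply: eq_bigl => -[x y]; exact: PE.
rewrite -(pair_big_dep A B (fun _ _ => 1)) -sum_nat_const /=; apply: eq_bigr => x Ax.
by rewrite sum1_card Bk.
Qed.

Lemma card_disjoint_union (T : finType) (P P1 P2 : pred T) :
  (forall x, P x = P1 x || P2 x) -> (forall x, P1 x -> P2 x = false) -> #|P| = #|P1| + #|P2|.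
Proof.
move=> PE disj; rewrite -(cardID P1 P); congr (_ + _); apply: eq_card => x.
  all: rewrite !inE -!topredE /= PE.
  by case: (P1 x); rewrite ?andbF.
by have [/disj ->|] := boolP (P1 x).
Qed.

Lemma card_notin n (s : seq 'I_n) : uniq s -> #|[pred x | x \notin s]| = n - size s.
Proof.
move=> s_uniq; have := cardC (mem s); rewrite card_ord (card_uniqP s_uniq).
have -> : #|[predC s]| = #|[pred x | x \notin s]| by apply: eq_card.
by move/(congr1 (subn^~ (size s))); rewrite addKn.
Qed.

Lemma exists_notin n (s : seq 'I_n) : size s < n -> exists x, x \notin s.
Proof.
move=> lt_s_n; have /card_gt0P [x] : 0 < #|[predC s]|.
  rewrite lt0n; apply: contraTneq lt_s_n => cardC0.
  have := cardC (mem s); rewrite cardC0 addn0 card_ord => cardE.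
  by rewrite -leqNgt -[X in X <= _]cardE card_size.
by exists x.
Qed.

Ltac decide_eqs :=
  repeat match goal with H : is_true _ |- _ => revert H end;
  rewrite ?inE;
  repeat (match goal with
  | |- context [?x == ?x] => rewrite eqxx
  | H : ?x <> ?y |- context [?x == ?y] => rewrite (introF eqP H)
  | H : ?x <> ?y |- context [?y == ?x] => rewrite [y == x]eq_sym (introF eqP H)
  | |- context [?x == ?y] => is_var x; is_var y; case: (x =P y) => [?|?]; [subst x|]
  end; simpl);
  by rewrite ?andbT ?andbF.

Section Kautz.
Variables (d : nat) (hd : 3 <= d).

Lemma card_notin2 (x y : 'I_d.+1) : x != y -> #|[pred z | z \notin [:: x; y]]| = d - 1.
Proof. by move=> xy; rewrite card_notin //= inE xy. Qed.

Lemma exists_notin3 (x y z : 'I_d.+1) : exists p, p \notin [:: x; y; z].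
Proof. by apply: exists_notin; rewrite /= !ltnS. Qed.

Definition sK_distance (a b x y : 'I_d.+1) : nat :=
  if x == b then (if y == a then 4 else 1)
  else if y == b then (if x == a then 0 else 3)
  else if x == a then 3 else 2.

Definition sK_vertex (x y : 'I_d.+1) (xy : x != y) : sK_vert d := exist _ (x, y) xy.

Lemma sK_distance_eq0 (a b x y : 'I_d.+1) :
  a != b -> (sK_distance a b x y == 0) = (x == a) && (y == b).
Proof. by rewrite /sK_distance; decide_eqs. Qed.

Lemma sK_distance_arc (a b p q r : 'I_d.+1) : a != b -> p != q -> r != p -> r != q ->
  sK_distance a b q r <= (sK_distance a b p q).+1.
Proof. by rewrite /sK_distance; decide_eqs. Qed.

Lemma sK_distance_pred (a b x y : 'I_d.+1) : a != b -> 0 < sK_distance a b x y ->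
  exists2 p, p \notin [:: x; y] & sK_distance a b p x = (sK_distance a b x y).-1.
Proof.
rewrite /sK_distance => ab.
have [-> | xb] := eqVneq x b; [have [-> | ya] := eqVneq y a | have [-> | yb] := eqVneq y b].
- by have [p] := exists_notin3 a b a; exists p; decide_eqs.
- by exists a; decide_eqs.
- by have [p] := exists_notin3 a b x; exists p; decide_eqs.
- have [-> | xa] := eqVneq x a; last by exists b; decide_eqs.
  by have [p] := exists_notin3 a b y; exists p; decide_eqs.
Qed.

Lemma sK_is_dist (u v : sK_vert d) i :
  is_dist (@sK_arc d) u v i = (sK_distance (val u).1 (val u).2 (val v).1 (val v).2 == i).
Proof.
case: u => -[a b] /= ab.
apply: (is_dist_label (f := fun v => sK_distance a b (val v).1 (val v).2)) => [[[x y] /= xy] | | ].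
- by rewrite -(inj_eq val_inj) /= xpair_eqE sK_distance_eq0.
- move=> [[p q] /= pq] [[q' r] /= qr]; rewrite /sK_arc /= => /and3P [/eqP -> rp rq].
  exact: sK_distance_arc.
- move=> [[x y] /= xy] /(sK_distance_pred ab) [p]; rewrite !inE negb_or => /andP [px py] dist_p.
  by exists (sK_vertex px); rewrite //= /sK_arc /= eqxx eq_sym py eq_sym xy.
Qed.

Definition sK_sphere_size (i : nat) : nat := nth 0 [:: 1; d - 1; (d - 1) ^ 2; 2 * (d - 1); 1] i.

Lemma sK_distance_card (a b : 'I_d.+1) i : a != b ->
  #|[pred p : 'I_d.+1 * 'I_d.+1 | (p.1 != p.2) && (sK_distance a b p.1 p.2 == i)]|
  = sK_sphere_size i.
Proof.
rewrite /sK_distance => ab.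
case: i => [|[|[|[|[|i]]]]].
- by apply: (@eq_card1 _ (a, b)) => -[x y]; rewrite !inE /= xpair_eqE; decide_eqs.
- rewrite (@card_prod_dep _ _ _ (pred1 b) (fun=> [pred y | y \notin [:: a; b]]) (d - 1)).
  + by rewrite card1 mul1n.
  + by move=> x y; rewrite /= !inE; decide_eqs.
  + by move=> x _; rewrite card_notin2.
- rewrite (@card_prod_dep _ _ _ [pred x | x \notin [:: a; b]]
                             (fun x => [pred y | y \notin [:: x; b]]) (d - 1)).
  + by rewrite card_notin2.
  + by move=> x y; rewrite /= !inE; decide_eqs.
  + by move=> x; rewrite !inE negb_or => /andP [_ xb]; rewrite card_notin2.
- rewrite (@card_disjoint_union _ _ [pred p | (p.1 == a) && (p.2 \notin [:: a; b])]
                                    [pred p | (p.1 \notin [:: a; b]) && (p.2 == b)]).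
  + rewrite (@card_prod_dep _ _ _ (pred1 a) (fun=> [pred y | y \notin [:: a; b]]) (d - 1)) //.
    rewrite (@card_prod_dep _ _ _ [pred x | x \notin [:: a; b]] (fun=> pred1 b) 1) //.
    * by rewrite card1 card_notin2 // /sK_sphere_size /=; lia.
    * by move=> x _; rewrite card1.
    * by move=> x _; rewrite card_notin2.
  + by move=> [x y]; rewrite /= !inE; decide_eqs.
  + by move=> [x y]; rewrite /= !inE; decide_eqs.
- by apply: (@eq_card1 _ (b, a)) => -[x y]; rewrite !inE /= xpair_eqE; decide_eqs.
- by rewrite /sK_sphere_size nth_default //; apply: eq_card0 => -[x y]; rewrite !inE; decide_eqs.
Qed.

Lemma sK_n_at (u : sK_vert d) i : n_at (@sK_arc d) u i = sK_sphere_size i.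
Proof.
case: u => -[a b] ab; rewrite -(sK_distance_card i ab).
rewrite -(card_sig_set (fun p => p.1 != p.2) (fun p => sK_distance a b p.1 p.2 == i)).
by apply: eq_card => v; rewrite !inE sK_is_dist.
Qed.

Lemma sK_antipodal : antipodal (@sK_arc d).
Proof.
have antipode (u : sK_vert d) : exists v,
    [set w | is_dist (@sK_arc d) u w 4] = [set v] /\ is_dist (@sK_arc d) v u 4.
  case: u => -[a b] /= ab; have ba : b != a by rewrite eq_sym.
  exists (sK_vertex ba); split; last by rewrite sK_is_dist /= /sK_distance !eqxx.
  apply/setP => -[[x y] xy]; rewrite !inE sK_is_dist -(inj_eq val_inj) /= xpair_eqE /sK_distance.
  by decide_eqs.
exists 4; split => //; split.
- move=> u v; exists (sK_distance (val u).1 (val u).2 (val v).1 (val v).2).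
  by rewrite sK_is_dist eqxx /sK_distance; split => //; do !case: ifP.
- have u0 : sK_vert d by apply: (@sK_vertex ord0 ord_max); apply/eqP => /(congr1 val) /=; lia.
  by have [v [_ vu0]] := antipode u0; exists v, u0.
Qed.

Definition CK_distance (a b c x y z : 'I_d.+1) : nat :=
  if (x, y, z) == (a, b, c) then 0 else (sK_distance b c x y).+1.

Definition CK_vertex (x y z : 'I_d.+1) (xyz : [&& x != y, x != z & y != z]) : CK_vert d :=
  exist _ (x, y, z) xyz.

Lemma CK_is_dist (u v : CK_vert d) i :
  is_dist (@CK_arc d) u v i =
  (CK_distance (val u).1.1 (val u).1.2 (val u).2 (val v).1.1 (val v).1.2 (val v).2 == i).
Proof.
case: u => -[[a b] c] /= abc; case/and3P: (abc) => ab ac bc.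
apply: (is_dist_label (f := fun v => CK_distance a b c (val v).1.1 (val v).1.2 (val v).2)).
- by move=> [[[x y] z] xyz]; rewrite -(inj_eq val_inj) /= /CK_distance; case: ifP.
- move=> [[[p q] r] /= pqr] [[[q' r'] s] /= qrs]; case/and3P: (pqr) => pq pr qr.
  rewrite /CK_arc /= => /and4P [/eqP -> /eqP -> sq sr]; rewrite /CK_distance.
  case: ifP => // _; case: ifP => [/eqP [_ -> ->] | _].
  by rewrite /sK_distance (negbTE bc) !eqxx.
by rewrite ltnS sK_distance_arc // eq_sym.
move=> [[[x y] z] /= xyz]; case/and3P: (xyz) => xy xz yz; rewrite /CK_distance.
case: ifP => // _ _ /=; have zx : z != x by rewrite eq_sym.
have zy : z != y by rewrite eq_sym.
have [/eqP | dist_pos] := posnP (sK_distance b c x y).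
  rewrite sK_distance_eq0 // => /andP [/eqP xb /eqP yc]; subst x y.
  exists (CK_vertex abc); last by rewrite /CK_arc /= !eqxx zx zy.
  by rewrite /= eqxx /sK_distance (negbTE bc) !eqxx.
have [p] := sK_distance_pred bc dist_pos; rewrite !inE negb_or => /andP [px py] dist_p.
have pxy : [&& p != x, p != y & x != y] by rewrite px py xy.
exists (CK_vertex pxy); rewrite /= /CK_arc /= ?eqxx ?zx ?zy // ifN ?dist_p ?prednK //.
rewrite !xpair_eqE; apply: contraTN dist_pos => /andP [/andP [_ /eqP ->] /eqP ->].
by rewrite /sK_distance (negbTE bc) !eqxx.
Qed.

Lemma CK_distance_card (a b c : 'I_d.+1) i : [&& a != b, a != c & b != c] ->
  #|[pred p : 'I_d.+1 * 'I_d.+1 * 'I_d.+1 | [&& p.1.1 != p.1.2, p.1.1 != p.2 & p.1.2 != p.2]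
       && (CK_distance a b c p.1.1 p.1.2 p.2 == i.+1)]| + (i == 2)
  = sK_sphere_size i * (d - 1).
Proof.
case/and3P=> ab ac bc; rewrite -(sK_distance_card i bc).
set L := [pred p : 'I_d.+1 * 'I_d.+1 * 'I_d.+1 | [&& p.1.1 != p.1.2, p.1.1 != p.2 & p.1.2 != p.2]
            && (CK_distance a b c p.1.1 p.1.2 p.2 == i.+1)].
set W := [pred p : 'I_d.+1 * 'I_d.+1 * 'I_d.+1 | [&& p.1.1 != p.1.2, p.1.1 != p.2 & p.1.2 != p.2]
            && (sK_distance b c p.1.1 p.1.2 == i)].
transitivity #|W|.
  have [i2 | i2] := eqVneq i 2.
    subst i.
    rewrite [RHS](card_disjoint_union (P1 := L) (P2 := pred1 (a, b, c))) ?card1 //.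
      by move=> [[x y] z]; rewrite /= /CK_distance /sK_distance !xpair_eqE; decide_eqs.
    by move=> [[x y] z]; rewrite /= /CK_distance !xpair_eqE; decide_eqs.
  rewrite addn0; apply: eq_card => -[[x y] z]; rewrite !inE /= /CK_distance.
  have [[-> -> ->] | //] := eqVneq (x, y, z) (a, b, c).
  by rewrite /sK_distance (negbTE ac) (negbTE bc) (negbTE ab) [2 == i]eq_sym (negbTE i2) !andbF.
rewrite (card_prod_dep (A := [pred q | (q.1 != q.2) && (sK_distance b c q.1 q.2 == i)])
                       (B := fun q => [pred z | z \notin [:: q.1; q.2]]) (k := d - 1)) //.
- by move=> [x y] z; rewrite /= !inE; decide_eqs.
- by move=> [x y] /andP [xy _]; rewrite card_notin2.
Qed.

Definition CK_sphere_size (i : nat) : nat :=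
  if i is j.+1 then sK_sphere_size j * (d - 1) - (j == 2) else 1.

Lemma CK_n_at (u : CK_vert d) i : n_at (@CK_arc d) u i = CK_sphere_size i.
Proof.
case: i => [|i]; first exact: n_at0.
case: u => -[[a b] c] abc; rewrite /= -(CK_distance_card i abc) addnK.
rewrite -(card_sig_set (fun p => [&& p.1.1 != p.1.2, p.1.1 != p.2 & p.1.2 != p.2])
                       (fun p => CK_distance a b c p.1.1 p.1.2 p.2 == i.+1)).
by apply: eq_card => v; rewrite !inE CK_is_dist.
Qed.
End Kautz.

Theorem mainTheorem14 (d : nat) (hd : 3 <= d) :
  ((forall u : sK_vert d,
      (n_at (@sK_arc d) u 0 = 1 /\
          n_at (@sK_arc d) u 1 = d - 1 /\
          n_at (@sK_arc d) u 2 = (d - 1) ^ 2 /\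
          n_at (@sK_arc d) u 3 = 2 * (d - 1) /\
          n_at (@sK_arc d) u 4 = 1 /\
          forall i, 5 <= i -> n_at (@sK_arc d) u i = 0))
   /\ antipodal (@sK_arc d))
  /\
  (forall u : CK_vert d,
      (n_at (@CK_arc d) u 0 = 1 /\
          n_at (@CK_arc d) u 1 = d - 1 /\
          n_at (@CK_arc d) u 2 = (d - 1) ^ 2 /\
          n_at (@CK_arc d) u 3 = (d - 1) ^ 3 - 1 /\
          n_at (@CK_arc d) u 4 = 2 * (d - 1) ^ 2 /\
          n_at (@CK_arc d) u 5 = d - 1 /\
          forall i, 6 <= i -> n_at (@CK_arc d) u i = 0)).
Proof.
split; [split|].
- move=> u; rewrite !(sK_n_at hd); do 5!split => //.
  by move=> i le5i; rewrite (sK_n_at hd) /sK_sphere_size nth_default.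
- exact: sK_antipodal hd.
- move=> u; rewrite !(CK_n_at hd) /CK_sphere_size /sK_sphere_size /=; repeat split; try lia.
  by move=> [|i] // le6i; rewrite (CK_n_at hd) /= /sK_sphere_size nth_default.
Qed.
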